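(* Let $R$ be a commutative ring with identity that is not an integral domain. If $\gamma_t(\Gamma(R))<\infty$ and $R$ is not isomorphic to $\mathbb{Z}_2\times D$ for any integral domain $D$, then $\gamma_t(\Gamma(R))=\gamma(\Gamma(R))$.
   Context: All rings are commutative with identity. The zero-divisor graph $\Gamma(R)$ has vertex set $Z(R)^*$ (nonzero zero-divisors); distinct $r,s$ are adjacent iff $rs=0$, and $x$ is adjacent to itself iff $x^2=0$. A dominating set is $X\subseteq Z(R)^*$ such that every vertex not in $X$ is adjacent to some element of $X$; a total dominating set is $X$ such that every vertex (including those in $X$) is adjacent to some element of $X$ (self-adjacency counts). $\gamma,\gamma_t$ are the respective minimum cardinalities. *)

From HB Require Import structures.
From mathcomp Require Import all_boot all_order all_algebra.
Set Implicit Arguments. Unset Strict Implicit. Unset Printing Implicit Defensive.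
Import GRing.Theory.
Local Open Scope ring_scope.

(* Z(R)^* : nonzero zero-divisors, the vertex set of Gamma(R). *)
Definition zd_star (R : comNzRingType) (x : R) : Prop :=
  x != 0 /\ exists y : R, y != 0 /\ x * y = 0.

(* adjacency in Gamma(R): distinct r,s adjacent iff rs = 0; x adjacent to
   itself iff x^2 = 0.  In both cases: x * y = 0. *)
Definition zd_adj (R : comNzRingType) (x y : R) : Prop := x * y = 0.

(* finite vertex subsets are represented by duplicate-free sequences;
   cardinality = size *)
Definition vertex_subset (R : comNzRingType) (X : seq R) : Prop :=
  uniq X /\ forall x, x \in X -> zd_star x.

Definition dominating (R : comNzRingType) (X : seq R) : Prop :=
  vertex_subset X /\
  forall v : R, zd_star v -> v \notin X -> exists2 x, x \in X & zd_adj v x.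

Definition total_dominating (R : comNzRingType) (X : seq R) : Prop :=
  vertex_subset X /\
  forall v : R, zd_star v -> exists2 x, x \in X & zd_adj v x.

(* gamma(Gamma(R)) = n  (minimum over finite dominating sets; this is the
   true minimum whenever some finite dominating set exists) *)
Definition is_domination_number (R : comNzRingType) (n : nat) : Prop :=
  (exists X : seq R, dominating X /\ size X = n) /\
  forall X : seq R, dominating X -> (n <= size X)%N.

Definition is_total_domination_number (R : comNzRingType) (n : nat) : Prop :=
  (exists X : seq R, total_dominating X /\ size X = n) /\
  forall X : seq R, total_dominating X -> (n <= size X)%N.

Definition total_domination_finite (R : comNzRingType) : Prop :=
  exists X : seq R, total_dominating X.

Definition is_integral_domain (R : comNzRingType) : Prop :=
  forall a b : R, a * b = 0 -> a = 0 \/ b = 0.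

Definition ring_iso (R S : comNzRingType) : Prop :=
  exists f : {rmorphism R -> S}, bijective f.

From HB Require Import structures.
From mathcomp Require Import all_boot all_order all_algebra.
From mathcomp Require Import ring.
From Stdlib Require Import Classical ClassicalEpsilon.
Set Implicit Arguments. Unset Strict Implicit. Unset Printing Implicit Defensive.
Import GRing.Theory.
Local Open Scope ring_scope.

(* Every total dominating set is dominating, so it suffices to turn any finite
   dominating list L into a total dominating one that is no longer.  While some
   v in L has no neighbour in L, L can be modified -- by replacing v with one
   of its neighbours, or by multiplying some elements of L by ring elements,
   which only enlarges their annihilators -- so that it stays dominating, keeps
   its length and has fewer isolated elements.  The one configuration where no
   such move exists is L = {v} with v^2 <> 0, ann(v^2) = ann(v) and v adjacent
   to every other vertex; then v is an idempotent with vR = {0, v} and (1 - v)R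
   a domain, so R is isomorphic to Z_2 x (1 - v)R, which is excluded. *)

Record Z2_idempotent (R : comNzRingType) := Z2Idempotent {
  z2e : R;
  z2e_idem : z2e * z2e = z2e;
  z2e_neq0 : z2e != 0;
  z2e_neq1 : z2e != 1;
  z2e_mulr : forall r : R, z2e * r = 0 \/ z2e * r = z2e;
  z2e_ann_domain : forall b c : R,
    b * z2e = 0 -> c * z2e = 0 -> b * c = 0 -> b = 0 \/ c = 0 }.

Record ann (R : comNzRingType) (i : Z2_idempotent R) :=
  Ann { ann_val : R; ann_valP : ann_val * z2e i == 0 }.

HB.instance Definition _ R i := [isSub for @ann_val R i].
HB.instance Definition _ R i := [Choice of @ann R i by <:].

Section AnnZmodule.
Variables (R : comNzRingType) (i : Z2_idempotent R).
Local Notation e := (z2e i).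
Local Notation A := (ann i).

Lemma ann_addP (a b : A) : (ann_val a + ann_val b) * e == 0.
Proof. by rewrite mulrDl (eqP (ann_valP a)) (eqP (ann_valP b)) addr0. Qed.
Lemma ann_oppP (a : A) : (- ann_val a) * e == 0.
Proof. by rewrite mulNr (eqP (ann_valP a)) oppr0. Qed.

Definition ann0 : A := Ann (introT eqP (mul0r e)).
Definition ann_add (a b : A) : A := Ann (ann_addP a b).
Definition ann_opp (a : A) : A := Ann (ann_oppP a).

Lemma ann_addA : associative ann_add.
Proof. by move=> a b c; apply: val_inj; rewrite /= addrA. Qed.
Lemma ann_addC : commutative ann_add.
Proof. by move=> a b; apply: val_inj; rewrite /= addrC. Qed.
Lemma ann_add0 : left_id ann0 ann_add.
Proof. by move=> a; apply: val_inj; rewrite /= add0r. Qed.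
Lemma ann_addN : left_inverse ann0 ann_opp ann_add.
Proof. by move=> a; apply: val_inj; rewrite /= addNr. Qed.
End AnnZmodule.

HB.instance Definition _ R i := GRing.isZmodule.Build (@ann R i)
  (@ann_addA R i) (@ann_addC R i) (@ann_add0 R i) (@ann_addN R i).

Section AnnRing.
Variables (R : comNzRingType) (i : Z2_idempotent R).
Local Notation e := (z2e i).
Local Notation A := (ann i).

Lemma ann1P : (1 - e) * e == 0.
Proof. by rewrite mulrBl mul1r z2e_idem subrr. Qed.
Lemma ann_mulP (a b : A) : (ann_val a * ann_val b) * e == 0.
Proof. by rewrite -mulrA (eqP (ann_valP b)) mulr0. Qed.

(* [ann i] is the ring [(1 - e)R], whose unit is [1 - e]. *)
Definition ann1 : A := Ann ann1P.
Definition ann_mul (a b : A) : A := Ann (ann_mulP a b).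

Lemma ann_mulA : associative ann_mul.
Proof. by move=> a b c; apply: val_inj; rewrite /= mulrA. Qed.
Lemma ann_mulC : commutative ann_mul.
Proof. by move=> a b; apply: val_inj; rewrite /= mulrC. Qed.
Lemma ann_mul1 : left_id ann1 ann_mul.
Proof.
by move=> a; apply: val_inj; rewrite /= mulrBl mul1r mulrC (eqP (ann_valP a)) subr0.
Qed.
Lemma ann_mulDl : left_distributive ann_mul +%R.
Proof. by move=> a b c; apply: val_inj; rewrite /= mulrDl. Qed.
Lemma ann1_neq0 : ann1 != 0.
Proof. by apply/eqP => /(congr1 val) /= /eqP; rewrite subr_eq0 eq_sym (negbTE (z2e_neq1 i)). Qed.
End AnnRing.

HB.instance Definition _ R i := GRing.Zmodule_isComNzRing.Build (@ann R i)
  (@ann_mulA R i) (@ann_mulC R i) (@ann_mul1 R i) (@ann_mulDl R i) (@ann1_neq0 R i).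

Section AnnUnitRing.
Variables (R : comNzRingType) (i : Z2_idempotent R).
Local Notation A := (ann i).

Definition ann_unit (x : A) : bool :=
  if excluded_middle_informative (exists y : A, y * x = 1) then true else false.
Definition ann_inv (x : A) : A :=
  match excluded_middle_informative (exists y : A, y * x = 1) with
  | left H => proj1_sig (constructive_indefinite_description _ H)
  | right _ => x
  end.

Lemma ann_mulVx : {in ann_unit, left_inverse 1 ann_inv *%R}.
Proof.
move=> x; rewrite /ann_unit /ann_inv /in_mem /=.
by case: excluded_middle_informative => // H _; case: constructive_indefinite_description.
Qed.
Lemma ann_unitPl (x y : A) : y * x = 1 -> ann_unit x.
Proof. by move=> yx; rewrite /ann_unit; case: excluded_middle_informative => // -[]; exists y. Qed.
Lemma ann_inv_out : {in [predC ann_unit], ann_inv =1 id}.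
Proof.
by move=> x; rewrite inE /ann_unit /ann_inv /in_mem /=; case: excluded_middle_informative.
Qed.
End AnnUnitRing.

HB.instance Definition _ R i := GRing.ComNzRing_hasMulInverse.Build (@ann R i)
  (@ann_mulVx R i) (@ann_unitPl R i) (@ann_inv_out R i).

Lemma ann_integral (R : comNzRingType) (i : Z2_idempotent R) :
  GRing.integral_domain_axiom (@ann R i).
Proof.
move=> x y /(congr1 val) /= xy.
have [x0|y0] := z2e_ann_domain (eqP (ann_valP x)) (eqP (ann_valP y)) xy.
  by rewrite (_ : x = 0) ?eqxx //; apply: val_inj.
by rewrite orbC (_ : y = 0) ?eqxx //; apply: val_inj.
Qed.

HB.instance Definition _ R i := GRing.ComUnitRing_isIntegral.Build (@ann R i) (@ann_integral R i).

Section Z2Split.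
Variables (R : comNzRingType) (i : Z2_idempotent R).
Local Notation e := (z2e i).

Lemma ann_subP (r : R) : (r - e * r) * e == 0.
Proof. by rewrite mulrBl -mulrA [r * _]mulrC mulrA z2e_idem subrr. Qed.

(* [r = e r + (1 - e) r], where [e r] is [0] or [e]. *)
Definition Z2_split (r : R) : 'Z_2 * ann i := (if e * r == 0 then 0 else 1, Ann (ann_subP r)).

Lemma Z2_split_zmod : zmod_morphism Z2_split.
Proof.
move=> x y; congr (_, _); last by apply: val_inj => /=; ring.
rewrite /= mulrBr.
by case: (z2e_mulr i x) => ->; case: (z2e_mulr i y) => ->;
  rewrite ?subrr ?subr0 ?sub0r ?oppr_eq0 ?eqxx ?(negbTE (z2e_neq0 i)) //=; apply/eqP.
Qed.

Lemma Z2_split_monoid : monoid_morphism Z2_split.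
Proof.
split.
  congr (_, _); first by rewrite /= mulr1 (negbTE (z2e_neq0 i)).
  by apply: val_inj; rewrite /= mulr1.
move=> x y; congr (_, _); last first.
  apply: val_inj => /=.
  have -> : (x - e * x) * (y - e * y) = x * y - (e + e - e * e) * (x * y) by ring.
  by rewrite z2e_idem addrK.
rewrite /= -[in e * _](z2e_idem i) mulrACA.
by case: (z2e_mulr i x) => ->; case: (z2e_mulr i y) => ->;
  rewrite ?mul0r ?mulr0 ?z2e_idem ?eqxx ?(negbTE (z2e_neq0 i)) /= ?mul0r ?mulr0 ?mulr1.
Qed.

HB.instance Definition _ := GRing.isZmodMorphism.Build R _ Z2_split Z2_split_zmod.
HB.instance Definition _ := GRing.isMonoidMorphism.Build R _ Z2_split Z2_split_monoid.

Lemma Z2_split_bij : bijective Z2_split.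
Proof.
exists (fun p => (if p.1 == 0 then 0 else e) + ann_val p.2).
  move=> r /=; case: (z2e_mulr i r) => ->; rewrite ?eqxx ?(negbTE (z2e_neq0 i)) /=.
    by rewrite add0r subr0.
  by rewrite addrC subrK.
move=> [a d]; have de : e * ann_val d = 0 by rewrite mulrC; exact/eqP/ann_valP.
have [-> | ->] : a = 0 \/ a = 1 by case: a => -[|[|]] // ?; [left|right]; apply: val_inj.
  by congr (_, _); [|apply: val_inj]; rewrite /= add0r de ?subr0 ?eqxx.
congr (_, _); [|apply: val_inj]; rewrite /= mulrDr z2e_idem de addr0.
  by rewrite (negbTE (z2e_neq0 i)).
by rewrite addrAC subrr add0r.
Qed.

Lemma ring_iso_Z2_ann : ring_iso R ('Z_2 * ann i)%type.
Proof. by exists Z2_split; exact: Z2_split_bij. Qed.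
End Z2Split.

Lemma Z2_factor_of_dominating_vertex (R : comNzRingType) (v : R) :
  zd_star v -> v * v != 0 ->
  (forall r, v * v * r = 0 -> v * r = 0) ->
  (forall t, zd_star t -> t != v -> t * v = 0) ->
  exists D : idomainType, ring_iso R ('Z_2 * D)%type.
Proof.
move=> [v0 [p [p0 vp]]] vv0 ann_vv adj_v.
have vertex_of r : r != 0 -> r * p = 0 -> zd_star r by move=> r0 rp; split=> //; exists p.
have vv : v * v = v.
  apply/eqP; apply: contraT => vvNv; rewrite -(negbTE vv0); apply/eqP; apply: ann_vv.
  by rewrite adj_v //; apply: vertex_of => //; rewrite -mulrA vp mulr0.
have v_mulr r : v * r = 0 \/ v * r = v.
  have [vr0|vr0] := eqVneq (v * r) 0; [by left | right].
  apply/eqP; apply: contraT => vrNv; rewrite -(negbTE vr0); apply/eqP; apply: ann_vv.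
  rewrite -mulrA mulrCA mulrC adj_v //; apply: vertex_of => //.
  by rewrite mulrAC vp mul0r.
have v1 : v != 1 by apply: contraNneq p0 => v1; rewrite -[p]mulr1 -v1 mulrC vp.
have ann_domain b c : b * v = 0 -> c * v = 0 -> b * c = 0 -> b = 0 \/ c = 0.
  move=> bv cv bc; have [->|b0] := eqVneq b 0; first by left.
  have [->|c0] := eqVneq c 0; first by right.
  (* [b + v] is a vertex (it kills [c]) different from [v], yet [(b + v) v = v]. *)
  have bvv : (b + v) * v = v by rewrite mulrDl bv vv add0r.
  have bv0 : b + v != 0 by apply: contraNneq v0 => bv_0; rewrite -bvv bv_0 mul0r.
  have bvNv : b + v != v by rewrite -subr_eq0 addrK.
  have bvc : (b + v) * c = 0 by rewrite mulrDl bc add0r mulrC cv.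
  have := adj_v _ (conj bv0 (ex_intro _ c (conj c0 bvc))) bvNv.
  by rewrite bvv => v_0; rewrite v_0 eqxx in v0.
by exists (ann (Z2Idempotent vv v0 v1 v_mulr ann_domain)); exact: ring_iso_Z2_ann.
Qed.

Lemma count_lt_in (T : eqType) (a b : pred T) (s : seq T) :
  {in s, forall x, a x -> b x} -> has (predD b a) s -> (count a s < count b s)%N.
Proof.
move=> sab /hasP [x xs /andP [nax bx]].
rewrite -[count b s]size_filter -(count_predC a (filter b s)) !count_filter.
have -> : count (predI a b) s = count a s.
  by apply: eq_in_count => y ys /=; case ay: (a y); rewrite //= (sab y ys ay).
rewrite -{1}[count a s]addn0 ltn_add2l -has_count; apply/hasP.
by exists x => //=; rewrite nax bx.
Qed.

Section Domination.
Variable R : comNzRingType.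
Implicit Types (L : seq R) (a : R -> R).

Definition dominates L :=
  (forall x, x \in L -> zd_star x) /\
  (forall t, zd_star t -> t \notin L -> exists2 x, x \in L & t * x = 0).

Definition isolated L (x : R) : bool := ~~ has (fun u => x * u == 0) L.

Lemma isolatedPn L x : reflect (exists2 u, u \in L & x * u = 0) (~~ isolated L x).
Proof. by rewrite negbK; apply: (iffP hasP) => -[u uL /eqP]; exists u. Qed.

Definition isolated_count L := count (isolated L) L.

Definition reducible L := exists L',
  [/\ dominates L', size L' = size L & (isolated_count L' < isolated_count L)%N].

Lemma total_dominating_undup L :
  dominates L -> isolated_count L = 0%N -> total_dominating (undup L).
Proof.
move=> [Lzd Ldom] /eqP; rewrite -leqn0 leqNgt -has_count => /hasPn noiso.
split; first by split=> [|x]; rewrite ?undup_uniq ?mem_undup //; exact: Lzd.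
move=> v vzd; have [vL|vL] := boolP (v \in L).
  by have /isolatedPn [u uL vu] := noiso v vL; exists u; rewrite ?mem_undup.
by have [u uL vu] := Ldom v vzd vL; exists u; rewrite ?mem_undup.
Qed.

Lemma dominates_mul_map L a :
  dominates L -> {in L, forall z, z * a z != 0} ->
  {in L, forall t, isolated L t ->
     t * a t = t \/ exists2 z, z \in L & t * (z * a z) = 0} ->
  dominates [seq z * a z | z <- L].
Proof.
move=> [Lzd Ldom] za0 moved.
have nbr_map t z : z \in L -> t * z = 0 -> exists2 x, x \in [seq z * a z | z <- L] & t * x = 0.
  by move=> zL tz; exists (z * a z); [exact: map_f | rewrite mulrA tz mul0r].
split=> [x /mapP [z zL ->] | t tzd tL'].
  have [_ [y [y0 zy]]] := Lzd z zL.
  by split; [exact: za0 | exists y; rewrite mulrAC zy mul0r].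
have [tL|tL] := boolP (t \in L); last by have [x xL tx] := Ldom t tzd tL; exact: nbr_map _ _ xL tx.
have [tiso|/isolatedPn [u uL tu]] := boolP (isolated L t); last exact: nbr_map _ _ uL tu.
have [tat|[z zL tz]] := moved t tL tiso; last by exists (z * a z); first exact: map_f.
by case/negP: tL'; rewrite -tat; exact: map_f.
Qed.

Lemma isolated_count_mul_map L a v z :
  v \in L -> isolated L v -> z \in L -> v * (z * a z) = 0 ->
  (isolated_count [seq x * a x | x <- L]%R < isolated_count L)%N.
Proof.
move=> vL viso zL vz; rewrite /isolated_count count_map; apply: count_lt_in.
  move=> x xL /=; apply: contraLR => /isolatedPn [u uL xu]; apply/isolatedPn.
  by exists (u * a u); [exact: map_f | rewrite mulrACA xu mul0r].
apply/hasP; exists v => //=; rewrite viso andbT; apply/isolatedPn.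
by exists (z * a z); [exact: map_f | rewrite mulrAC vz mul0r].
Qed.

Lemma reducible_mul_map L a v z :
  dominates L -> {in L, forall z, z * a z != 0} ->
  {in L, forall t, isolated L t ->
     t * a t = t \/ exists2 z, z \in L & t * (z * a z) = 0} ->
  v \in L -> isolated L v -> z \in L -> v * (z * a z) = 0 -> reducible L.
Proof.
move=> Ldom za0 moved vL viso zL vz; exists [seq x * a x | x <- L].
by rewrite size_map; split; [exact: dominates_mul_map | | exact: isolated_count_mul_map vz].
Qed.

Definition private_nbr L v p :=
  [/\ p != 0, p \notin L, p * v = 0 & forall u, u \in L -> u != v -> p * u != 0].

Lemma reducible_of_no_private_nbr L v :
  dominates L -> v \in L -> isolated L v -> ~ (exists p, private_nbr L v p) ->
  reducible L.
Proof.
move=> [Lzd Ldom] vL viso nopriv.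
have shared t : t != 0 -> t \notin L -> t * v = 0 -> exists2 u, u \in L & (u != v) && (t * u == 0).
  move=> t0 tL tv; apply: NNPP => nu; apply: nopriv; exists t; split=> // u uL uv.
  by apply/negP => /eqP tu; apply: nu; exists u => //; rewrite uv tu eqxx.
have [v0 [y [y0 vy]]] := Lzd v vL.
have yL : y \notin L by apply: contraL viso => yL; apply/isolatedPn; exists y.
have yv : y * v = 0 by rewrite mulrC.
have [u uL /andP [uv /eqP yu]] := shared y y0 yL yv.
pose f z := if z == v then y else z.
have fE z : z != v -> f z = z by rewrite /f => /negbTE ->.
have fv : f v = y by rewrite /f eqxx.
have fL z : z \in L -> f z \in map f L by exact: map_f.
exists (map f L); rewrite size_map; split=> //.
- split=> [x /mapP [z zL ->] | t tzd tL'].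
    by rewrite /f; case: eqP => _; [split=> //; exists v | exact: Lzd].
  have [tL|tL] := boolP (t \in L).
    have [->|tv] := eqVneq t v; first by exists y; rewrite // -fv fL.
    by rewrite -(fE t tv) fL in tL'.
  have [x xL tx] := Ldom t tzd tL.
  have [xv|xv] := eqVneq x v; last by exists x => //; rewrite -(fE x xv) fL.
  rewrite xv in tx; have [w wL /andP [wv /eqP tw]] := shared t tzd.1 tL tx.
  by exists w => //; rewrite -(fE w wv) fL.
have nbr_v w : w \in L -> w * v != 0.
  by move=> wL; apply: contraL viso => /eqP wv; apply/isolatedPn; exists w; rewrite // mulrC.
rewrite /isolated_count count_map; apply: count_lt_in.
  move=> z zL /=; apply: contraLR => /isolatedPn [w wL zw]; apply/isolatedPn.
  have zv : z != v by apply: contraNneq (nbr_v w wL) => <-; rewrite mulrC zw.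
  have wv : w != v by apply: contraNneq (nbr_v z zL) => <-; rewrite zw.
  by exists w; rewrite ?fE // -(fE w wv) fL.
apply/hasP; exists v => //=; rewrite viso andbT fv; apply/isolatedPn.
by exists u; rewrite // -(fE u uv) fL.
Qed.

Lemma reducible_of_private_nbr_nonisolated L v p w :
  dominates L -> v \in L -> isolated L v -> private_nbr L v p ->
  w \in L -> ~~ isolated L w -> reducible L.
Proof.
move=> Ldom vL viso [_ _ pv pL] wL wniso.
have wv : w != v by apply: contraNneq wniso => ->.
apply: (reducible_mul_map (a := fun z => if z == w then p else 1) Ldom _ _ vL viso wL).
- move=> z zL /=; have [->|_] := eqVneq z w; first by rewrite mulrC pL.
  by rewrite mulr1; case: (Ldom.1 z zL).
- move=> t tL tiso /=; left; have [tw|_] := eqVneq t w; last exact: mulr1.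
  by rewrite -tw tiso in wniso.
- by rewrite /= eqxx mulrCA [v * p]mulrC pv mulr0.
Qed.

Lemma reducible_of_private_nbrs L v w p q :
  dominates L -> v \in L -> isolated L v -> private_nbr L v p ->
  w \in L -> w != v -> private_nbr L w q -> reducible L.
Proof.
move=> Ldom vL viso [_ _ pv pL] wL wv [_ _ qw qL].
pose a z := if z == v then q else if z == w then p else 1.
apply: (reducible_mul_map (a := a) Ldom _ _ vL viso wL).
- move=> z zL; rewrite /a; have [->|zv] := eqVneq z v; first by rewrite mulrC qL // eq_sym.
  have [->|_] := eqVneq z w; first by rewrite mulrC pL.
  by rewrite mulr1; case: (Ldom.1 z zL).
- move=> t tL _; rewrite /a; have [->|tv] := eqVneq t v.
    by right; exists w; rewrite // (negbTE wv) eqxx mulrCA [v * p]mulrC pv mulr0.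
  have [->|_] := eqVneq t w; last by left; rewrite mulr1.
  by right; exists v; rewrite // eqxx mulrCA [w * q]mulrC qw mulr0.
- by rewrite /a (negbTE wv) eqxx mulrCA [v * p]mulrC pv mulr0.
Qed.

Lemma reducible_of_lone_vertex L v r :
  dominates L -> v \in L -> isolated L v -> all (pred1 v) L ->
  v * v * r = 0 -> v * r != 0 -> reducible L.
Proof.
move=> Ldom vL viso /allP Lv vvr vr.
apply: (reducible_mul_map (a := fun=> r) Ldom _ _ vL viso vL); rewrite ?mulrA //.
  by move=> z /Lv /eqP ->.
by move=> t /Lv /eqP -> _; right; exists v; rewrite ?mulrA.
Qed.

Lemma reducible_of_isolated L v :
  (forall D : idomainType, ~ ring_iso R ('Z_2 * D)%type) ->
  dominates L -> v \in L -> isolated L v -> reducible L.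
Proof.
move=> noZ2 Ldom vL viso.
have [[p pv]|] := classic (exists p, private_nbr L v p); last exact: reducible_of_no_private_nbr.
have [Liso|] := boolP (all (isolated L) L); last first.
  rewrite -has_predC => /hasP [w wL wniso].
  exact: reducible_of_private_nbr_nonisolated pv wL wniso.
have [Lv|] := boolP (all (pred1 v) L); last first.
  rewrite -has_predC => /hasP [w wL wv].
  have [[q qw]|] := classic (exists q, private_nbr L w q).
    exact: reducible_of_private_nbrs pv wL wv qw.
  exact: reducible_of_no_private_nbr Ldom wL (allP Liso w wL).
have [[r [vvr vr]]|] := classic (exists r, v * v * r = 0 /\ v * r != 0).
  exact: reducible_of_lone_vertex Lv vvr vr.
move=> ann_vv; exfalso.
have [D isoD] : exists D : idomainType, ring_iso R ('Z_2 * D)%type.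
  apply: (Z2_factor_of_dominating_vertex (Ldom.1 v vL)).
  - by apply: contraTneq viso => vv; apply/isolatedPn; exists v.
  - move=> r vvr; have [//|vr] := eqVneq (v * r) 0.
    by exfalso; apply: ann_vv; exists r.
  - move=> t tzd tv; have tL : t \notin L by apply: contra tv => /(allP Lv).
    by have [x /(allP Lv) /eqP <-] := Ldom.2 t tzd tL.
exact: noZ2 isoD.
Qed.

Lemma total_dominating_of_dominates L :
  (forall D : idomainType, ~ ring_iso R ('Z_2 * D)%type) ->
  dominates L -> exists2 T : seq R, total_dominating T & (size T <= size L)%N.
Proof.
move=> noZ2; have [k] := ubnP (isolated_count L); elim: k L => // k IH L ltLk Ldom.
have [iso0|] := eqVneq (isolated_count L) 0%N.
  by exists (undup L); [exact: total_dominating_undup | exact: size_undup].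
rewrite -lt0n -has_count => /hasP [v vL viso].
have [L' [L'dom <- ltL']] := reducible_of_isolated noZ2 Ldom vL viso.
exact: IH L' (leq_trans ltL' ltLk) L'dom.
Qed.

End Domination.

Local Close Scope ring_scope.

Theorem theorem4p3 (R : comNzRingType) :
  ~ is_integral_domain R ->
  total_domination_finite R ->
  (forall D : idomainType, ~ ring_iso R ('Z_2 * D)%type) ->
  forall n : nat, is_total_domination_number R n -> is_domination_number R n.
Proof.
move=> _ _ noZ2 n [[X [[Xv Xdom] sizeX]] minX]; split.
  by exists X; split=> //; split=> // v vzd _; exact: Xdom.
move=> Y [[_ Yzd] Ydom].
have [T Ttot sizeT] := total_dominating_of_dominates noZ2 (conj Yzd Ydom).
exact: leq_trans (minX T Ttot) sizeT.
Qed.
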